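(* Let $m>1$, $\chi>0$, $\alpha\in\mathbb R$, and let $p\ge2$ be an integer. (i) If $\chi<C_p$ and $\alpha\le0$, then $\mathcal F^p_{m,\alpha}$ has no critical point in $\mathcal R^p$. (ii) If $\chi=C_p$ and $\alpha<0$, then $\mathcal F^p_{m,\alpha}$ has no critical point in $\mathcal R^p$. (iii) If $\chi>C_p$, then any critical point $V\in\mathcal R^p$ of $\mathcal F^p_{m,\alpha}$ satisfies $\mathcal F^p_m(V)=\frac{2}{m-1}\alpha\,\frac{|V|^2}{2}$; in particular $\mathcal F^p_m(V)$ has the same sign as $\alpha$.
   Context: $\mathcal R^p=\{X\in\mathbb R^p: X_1<\dots<X_p,\ \sum_iX_i=0\}$. $\mathcal F^p_{m,\alpha}(X)=\frac1{m-1}\sum_{i=1}^{p-1}(X_{i+1}-X_i)^{1-m}-\frac{\chi}{m-1}\sum_{1\le i\ne j\le p}|X_i-X_j|^{1-m}+\alpha\frac{|X|^2}{2}$, $\mathcal F^p_m=\mathcal F^p_{m,0}$. $C_p$ is defined by $\frac1{C_p}=\max_{X\in\mathcal R^p}\frac{\sum_{1\le i\ne j\le p}|X_j-X_i|^{1-m}}{\sum_{i=1}^{p-1}(X_{i+1}-X_i)^{1-m}}$. A critical point is a point of $\mathcal R^p$ where the Euclidean gradient of the functional on $\mathbb R^p$ vanishes. *)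

From HB Require Import structures.
From mathcomp Require Import all_boot all_order all_algebra.
From mathcomp Require Import all_classical all_reals all_analysis.
Set Implicit Arguments. Unset Strict Implicit. Unset Printing Implicit Defensive.
Import Order.TTheory GRing.Theory Num.Theory.
Import numFieldNormedType.Exports.
Local Open Scope classical_set_scope.
Local Open Scope ring_scope.

(* Points of R^p are row vectors X : 'rV[R]_p, coordinate X_i = X ord0 i
   (i : 'I_p, i.e. indices 0..p-1 instead of 1..p). *)
Section Defs.
Variable R : realType.

Definition inRp (p : nat) (X : 'rV[R]_p) : Prop :=
  (forall i j : 'I_p, (i < j)%N -> X ord0 i < X ord0 j) /\
  \sum_(i < p) X ord0 i = 0.

Definition consec_sum (m : R) (p : nat) (X : 'rV[R]_p) : R :=
  \sum_(i < p) \sum_(j < p | val j == (val i).+1) (X ord0 j - X ord0 i) `^ (1 - m).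

Definition pair_sum (m : R) (p : nat) (X : 'rV[R]_p) : R :=
  \sum_(i < p) \sum_(j < p | j != i) `|X ord0 i - X ord0 j| `^ (1 - m).

Definition sqnorm (p : nat) (X : 'rV[R]_p) : R := \sum_(i < p) X ord0 i ^+ 2.

Definition Fmalpha (m chi alpha : R) (p : nat) (X : 'rV[R]_p) : R :=
  (m - 1)^-1 * consec_sum m X - chi / (m - 1) * pair_sum m X
  + alpha * (sqnorm X / 2).

Definition Fm (m chi : R) (p : nat) (X : 'rV[R]_p) : R := Fmalpha m chi 0 X.

(* C_p : 1/C_p = max_{X in R^p} pair_sum / consec_sum (the max is taken as sup) *)
Definition Cp (m : R) (p : nat) : R :=
  (sup [set pair_sum m X / consec_sum m X | X in [set X : 'rV[R]_p | inRp X]])^-1.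

Definition basis_vec (p : nat) (i : 'I_p) : 'rV[R]_p := \row_(j < p) (j == i)%:R.

Definition critical_point (p : nat) (F : 'rV[R]_p -> R) (X : 'rV[R]_p) : Prop :=
  forall i : 'I_p, derivable F X (basis_vec i) /\ 'D_(basis_vec i) F X = 0.

End Defs.

From HB Require Import structures.
From mathcomp Require Import all_boot all_order all_algebra.
From mathcomp Require Import all_classical all_reals all_analysis.
From mathcomp Require Import ring.
Set Implicit Arguments.
Unset Strict Implicit.
Unset Printing Implicit Defensive.
Import Order.TTheory GRing.Theory Num.Theory.
Import numFieldNormedType.Exports.
Local Open Scope classical_set_scope.
Local Open Scope ring_scope.

(* F^p_{m,alpha} is the sum of F^p_m, homogeneous of degree 1 - m on R^p, and of
   alpha |X|^2/2, homogeneous of degree 2.  At a critical point V the derivative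
   along the ray through V vanishes, so Euler's identity gives
   (1 - m) F^p_m(V) + alpha |V|^2 = 0, which is (iii).  The definition of C_p makes
   F^p_m positive on R^p when chi < C_p and nonnegative when chi = C_p, and this
   is incompatible with the sign of alpha in (i) and (ii). *)

Section RayDerivative.
Context {R : realType} {V : normedModType R}.

Lemma is_derive_line (f : V -> R) (x v : V) (c : R) :
  is_derive (0:R) 1 (fun h : R => f (h *: v + x)) c -> is_derive x v f c.
Proof.
move=> dfc; apply: DeriveDef; first exact/derivable1P.
rewrite -(@derive_val _ _ _ _ _ _ _ dfc) /derive.
suff -> : (fun h : R => h^-1 *: ((f \o shift x) (h *: v) - f x)) =
  (fun h : R => h^-1 *: (((fun h0 => f (h0 *: v + x)) \o shift 0) h%:A - f (0 *: v + x))) by [].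
apply/funext => h /=.
by rewrite addr0 scale0r add0r [_%:A]mulr1.
Qed.

Lemma is_derive_ray (f : V -> R) (x : V) (g : R -> R) (c : R) :
  (\forall t \near (1:R), f (t *: x) = g t) -> is_derive (1:R) 1 g c -> is_derive x x f c.
Proof.
move=> fg dg; apply: is_derive_line.
have {}fg : \forall h \near (0:R), f ((h + 1) *: x) = g (h + 1).
  by move: fg; rewrite (near_shift 0) /= subr0.
have dgs : is_derive (0:R) 1 (g \o shift 1) c.
  rewrite -[c]mulr1; apply: is_derive1_comp; last exact: is_derive_shift.
  by rewrite /= add0r.
apply: near_eq_is_derive dgs; apply: filterS fg => h /=.
by rewrite scalerDl scale1r.
Qed.
End RayDerivative.

Section CriticalPoint.
Context {R : realType} {p : nat}.

Lemma basis_vecE (i : 'I_p) : basis_vec R i = 'e_i.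
Proof. by apply/rowP => j; rewrite !mxE eqxx. Qed.

Lemma critical_point_derive (F : 'rV[R]_p -> R) (X v : 'rV[R]_p) :
  differentiable F X -> critical_point F X -> 'D_v F X = 0.
Proof.
move=> dF cF; rewrite deriveE // (row_sum_delta v) linear_sum big1 // => k _.
by rewrite linearZ /= -basis_vecE -deriveE // (proj2 (cF k)) scaler0.
Qed.

End CriticalPoint.

Section Homogeneity.
Context {R : realType} {p : nat}.
Variable m : R.
Implicit Types (X : 'rV[R]_p) (t : R).

Lemma consec_sumZ X t : 0 <= t -> inRp X ->
  consec_sum m (t *: X) = t `^ (1 - m) * consec_sum m X.
Proof.
move=> t0 [incX _]; rewrite /consec_sum mulr_sumr; apply: eq_bigr => i _.
rewrite mulr_sumr; apply: eq_bigr => j /eqP ji.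
by rewrite !mxE -mulrBr powRM // subr_ge0 ltW // incX // ji.
Qed.

Lemma pair_sumZ X t : 0 <= t -> pair_sum m (t *: X) = t `^ (1 - m) * pair_sum m X.
Proof.
move=> t0; rewrite /pair_sum mulr_sumr; apply: eq_bigr => i _.
rewrite mulr_sumr; apply: eq_bigr => j _.
by rewrite !mxE -mulrBr normrM ger0_norm // powRM.
Qed.

Lemma sqnormZ X t : sqnorm (t *: X) = t ^+ 2 * sqnorm X.
Proof. by rewrite /sqnorm mulr_sumr; apply: eq_bigr => i _; rewrite mxE exprMn. Qed.

Lemma FmalphaZ (chi alpha : R) X t : 0 <= t -> inRp X ->
  Fmalpha m chi alpha (t *: X)
  = t `^ (1 - m) * Fm m chi X + t ^+ 2 * (alpha * (sqnorm X / 2)).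
Proof.
move=> t0 hX; rewrite /Fm /Fmalpha consec_sumZ // pair_sumZ // sqnormZ.
by rewrite mul0r addr0; ring.
Qed.

End Homogeneity.

Section Radial.
Context {R : realType} {p : nat}.
Variables m chi alpha : R.

Lemma is_derive_Fmalpha_radial (X : 'rV[R]_p) : inRp X ->
  is_derive X X (Fmalpha m chi alpha (p:=p)) ((1 - m) * Fm m chi X + alpha * sqnorm X).
Proof.
move=> hX.
pose g := Fm m chi X \*: (@powR R ^~ (1 - m)) + (alpha * (sqnorm X / 2)) \*: (fun t : R => t ^+ 2).
apply: (@is_derive_ray _ _ _ _ g).
  near=> t; rewrite FmalphaZ // /g /=; first by rewrite !fctE /= mulrC [t ^+ 2 * _]mulrC.
  by apply: ltW; near: t; exact: lt_nbhsr.
have dpow := is_derive1_powR (1 - m) (@ltr01 R).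
have dsq : is_derive (1:R) 1 (fun t : R => t ^+ 2) (2%:R * 1 ^+ 1).
  split; [exact: exprn_derivable | by rewrite -derive1E exp_derive1].
apply: is_derive_eq (is_deriveD (is_deriveZ (Fm m chi X) dpow)
                                (is_deriveZ (alpha * (sqnorm X / 2)) dsq)) _.
by rewrite powR1 expr1n /GRing.scale /=; field.
Unshelve. all: by end_near. Qed.

End Radial.

Lemma inRp_coord_eq (R : realType) (p : nat) (X : 'rV[R]_p) (i j : 'I_p) :
  inRp X -> (X ord0 i == X ord0 j) = (i == j).
Proof.
move=> [incX _]; case: (ltngtP i j) => [ltij|ltji|/val_inj ->]; last by rewrite !eqxx.
- by rewrite lt_eqF ?incX // -val_eqE ltn_eqF.
- by rewrite gt_eqF ?incX // -val_eqE gtn_eqF.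
Qed.

Section Differentiability.
Context {R : realType} {p : nat}.
Implicit Types (X : 'rV[R]_p) (a : R).

Lemma differentiable_sum_cond n (P : pred 'I_n) (h : 'I_n -> 'rV[R]_p -> R) X :
  (forall i, P i -> differentiable (h i) X) ->
  differentiable (fun Y => \sum_(i < n | P i) h i Y) X.
Proof.
move=> dh; have -> : (fun Y => \sum_(i < n | P i) h i Y) =
    \sum_(i < n) (fun Y => if P i then h i Y else 0).
  by rewrite fct_sumE; apply/funext => Y; rewrite big_mkcond.
apply: differentiable_sum => i; case: (boolP (P i)) => [/dh //|_].
exact: differentiable_cst.
Qed.

Lemma differentiable_comp_coordB (g : R -> R) (i j : 'I_p) X :
  derivable g (X ord0 i - X ord0 j) 1 ->
  differentiable (fun Y : 'rV[R]_p => g (Y ord0 i - Y ord0 j)) X.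
Proof.
move=> /derivable1_diffP dg; apply: (differentiable_comp (g := g)) => //.
by apply: differentiableB; exact: differentiable_coord.
Qed.

Lemma differentiable_powR_coordB a (i j : 'I_p) X : X ord0 j < X ord0 i ->
  differentiable (fun Y : 'rV[R]_p => (Y ord0 i - Y ord0 j) `^ a) X.
Proof.
move=> ltji; apply: (differentiable_comp_coordB (g := fun w => w `^ a)).
by apply: derivable_powR; rewrite in_itv /= subr_gt0 ltji.
Qed.

Lemma differentiable_norm_powR_coordB a (i j : 'I_p) X : X ord0 i != X ord0 j ->
  differentiable (fun Y : 'rV[R]_p => `|Y ord0 i - Y ord0 j| `^ a) X.
Proof.
suff dpos k l : X ord0 l < X ord0 k ->
    differentiable (fun Y : 'rV[R]_p => `|Y ord0 k - Y ord0 l| `^ a) X.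
  rewrite neq_lt => /orP[/dpos dji|/dpos //].
  have -> : (fun Y : 'rV[R]_p => `|Y ord0 i - Y ord0 j| `^ a) =
            (fun Y : 'rV[R]_p => `|Y ord0 j - Y ord0 i| `^ a).
    by apply/funext => Y; rewrite distrC.
  exact: dji.
move=> ltlk; apply: (differentiable_comp_coordB (g := fun w => `|w| `^ a)).
have z0 : 0 < X ord0 k - X ord0 l by rewrite subr_gt0.
apply: (near_eq_derivable (f := fun w => w `^ a)); last first.
  by apply: derivable_powR; rewrite in_itv /= z0.
near=> w; rewrite ger0_norm // ltW //; near: w; exact: lt_nbhsr.
Unshelve. all: by end_near. Qed.

Lemma differentiable_Fmalpha (m chi alpha : R) X :
  inRp X -> differentiable (Fmalpha m chi alpha (p:=p)) X.
Proof.
move=> hX; have [incX _] := hX.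
apply: differentiableD; first apply: differentiableB.
- apply: differentiableZ; apply: differentiable_sum_cond => i _.
  apply: differentiable_sum_cond => j /eqP ji.
  by apply: differentiable_powR_coordB; apply: incX; rewrite ji.
- apply: differentiableZ; apply: differentiable_sum_cond => i _.
  apply: differentiable_sum_cond => j ji; apply: differentiable_norm_powR_coordB.
  by rewrite inRp_coord_eq // eq_sym.
- apply: differentiableM; first exact: differentiable_cst.
  apply: differentiableM; last exact: differentiable_cst.
  rewrite /sqnorm; apply: differentiable_sum_cond => i _.
  by apply: differentiableM; exact: differentiable_coord.
Qed.

End Differentiability.

Lemma Fm_critical_point (R : realType) (m chi alpha : R) (p : nat) (X : 'rV[R]_p) :
  1 < m -> inRp X -> critical_point (Fmalpha m chi alpha (p:=p)) X ->
  Fm m chi X = 2 / (m - 1) * alpha * (sqnorm X / 2).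
Proof.
move=> m_gt1 hX cX; have m1_neq0 : m - 1 != 0 by rewrite subr_eq0 gt_eqF.
have := critical_point_derive X (differentiable_Fmalpha m chi alpha hX) cX.
rewrite (@derive_val _ _ _ _ _ _ _ (is_derive_Fmalpha_radial m chi alpha hX)) => euler.
have scaled : (m - 1) * Fm m chi X = alpha * sqnorm X.
  by apply/eqP; rewrite -subr_eq0 -oppr_eq0 -euler; apply/eqP; ring.
by rewrite -(mulKf m1_neq0 (Fm m chi X)) scaled; field.
Qed.

Lemma sumr_gt0_term (R : numDomainType) (I : finType) (P : pred I) (F : I -> R) (k : I) :
  (forall i, P i -> 0 <= F i) -> P k -> 0 < F k -> 0 < \sum_(i | P i) F i.
Proof.
move=> F_ge0 Pk Fk; rewrite lt_def psumr_neq0 // sumr_ge0 // andbT.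
by apply/hasP; exists k; rewrite ?mem_index_enum ?Pk.
Qed.

Section Bounds.
Context {R : realType} {p : nat}.
Variable m : R.
Hypothesis p_ge2 : (2 <= p)%N.
Implicit Types (X : 'rV[R]_p).

Let i0 : 'I_p := Ordinal (ltn_trans (ltnSn 0) p_ge2).
Let i1 : 'I_p := Ordinal p_ge2.

Lemma consec_sum_gt0 X : inRp X -> 0 < consec_sum m X.
Proof.
move=> [incX _]; apply: (sumr_gt0_term (k := i0)) => // [i _|].
  by apply: sumr_ge0 => j _; exact: powR_ge0.
apply: (sumr_gt0_term (k := i1)) => // [j _|]; first exact: powR_ge0.
by apply: powR_gt0; rewrite subr_gt0 incX.
Qed.

Lemma pair_sum_gt0 X : inRp X -> 0 < pair_sum m X.
Proof.
move=> hX; apply: (sumr_gt0_term (k := i0)) => // [i _|].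
  by apply: sumr_ge0 => j _; exact: powR_ge0.
apply: (sumr_gt0_term (k := i1)) => //.
by apply: powR_gt0; rewrite normr_gt0 subr_eq0 inRp_coord_eq.
Qed.

Lemma sqnorm_gt0 X : inRp X -> 0 < sqnorm X.
Proof.
move=> [incX _]; rewrite lt_def sumr_ge0 => [|i _]; last exact: sqr_ge0.
rewrite andbT; apply/eqP => /psumr_eq0P sq0.
have X0 i : X ord0 i = 0.
  by apply/eqP; rewrite -sqrf_eq0; apply/eqP; apply: sq0 => // j _; exact: sqr_ge0.
by have := incX i0 i1 isT; rewrite !X0 ltxx.
Qed.

Lemma Cp_mul_pair_sum_le X : 0 < Cp m p -> inRp X ->
  Cp m p * pair_sum m X <= consec_sum m X.
Proof.
move=> Cp_gt0 hX.
have ratio_le : pair_sum m X / consec_sum m X <= (Cp m p)^-1.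
  (* without a supremum, sup returns 0 and then Cp m p = 0 *)
  move: Cp_gt0; rewrite /Cp invrK.
  set S := [set _ | _ in _]; have [supS _|/sup_out ->] := pselect (has_sup S).
    by apply: sup_upper_bound => //; exists X.
  by rewrite invr0 ltxx.
rewrite ler_pdivrMr ?consec_sum_gt0 // in ratio_le.
by rewrite -[consec_sum m X]mul1r -(mulfV (lt0r_neq0 Cp_gt0)) -mulrA ler_pM2l.
Qed.

Lemma FmE (chi : R) X : Fm m chi X = (consec_sum m X - chi * pair_sum m X) / (m - 1).
Proof. by rewrite /Fm /Fmalpha mul0r addr0; ring. Qed.

Lemma Fm_gt0 (chi : R) X : 1 < m -> 0 < chi -> chi < Cp m p -> inRp X -> 0 < Fm m chi X.
Proof.
move=> m_gt1 chi_gt0 chi_lt hX; rewrite FmE divr_gt0 ?subr_gt0 //.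
have Cp_gt0 : 0 < Cp m p by apply: lt_trans chi_lt.
apply: lt_le_trans (Cp_mul_pair_sum_le Cp_gt0 hX).
by rewrite ltr_pM2r ?pair_sum_gt0.
Qed.

Lemma Fm_ge0 (chi : R) X : 1 < m -> 0 < chi -> chi <= Cp m p -> inRp X -> 0 <= Fm m chi X.
Proof.
move=> m_gt1 chi_gt0 chi_le hX.
rewrite FmE divr_ge0 //; last by rewrite subr_ge0 ltW.
rewrite subr_ge0.
have Cp_gt0 : 0 < Cp m p by apply: lt_le_trans chi_le.
apply: le_trans (Cp_mul_pair_sum_le Cp_gt0 hX).
by rewrite ler_pM2r ?pair_sum_gt0.
Qed.

End Bounds.

Unset Implicit Arguments.

Theorem proposition2p4 (R : realType) (m chi alpha : R) (p : nat) :
  1 < m -> 0 < chi -> (2 <= p)%N ->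
  ((chi < Cp m p -> alpha <= 0 ->
      forall X : 'rV[R]_p, inRp X -> ~ critical_point (Fmalpha m chi alpha (p:=p)) X)
   /\
   (chi = Cp m p -> alpha < 0 ->
      forall X : 'rV[R]_p, inRp X -> ~ critical_point (Fmalpha m chi alpha (p:=p)) X)
   /\
   (Cp m p < chi ->
      forall V : 'rV[R]_p, inRp V -> critical_point (Fmalpha m chi alpha (p:=p)) V ->
        Fm m chi V = 2 / (m - 1) * alpha * (sqnorm V / 2)
        /\ Num.sg (Fm m chi V) = Num.sg alpha)).
Proof.
move=> m_gt1 chi_gt0 p_ge2.
have coef_gt0 : 0 < 2 / (m - 1) by rewrite divr_gt0 // subr_gt0.
have half_sqnorm_gt0 (X : 'rV[R]_p) : inRp X -> 0 < sqnorm X / 2.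
  by move=> hX; rewrite divr_gt0 ?(sqnorm_gt0 p_ge2).
split; [|split].
- move=> chi_lt alpha_le0 X hX /(Fm_critical_point m_gt1 hX) FmX.
  have := Fm_gt0 p_ge2 m_gt1 chi_gt0 chi_lt hX.
  by rewrite FmX -mulrA pmulr_rgt0 // pmulr_lgt0 ?half_sqnorm_gt0 // ltNge alpha_le0.
- move=> chi_eq alpha_lt0 X hX /(Fm_critical_point m_gt1 hX) FmX.
  have chi_le : chi <= Cp m p by rewrite chi_eq.
  have := Fm_ge0 p_ge2 m_gt1 chi_gt0 chi_le hX.
  by rewrite FmX -mulrA pmulr_rge0 // pmulr_lge0 ?half_sqnorm_gt0 // leNgt alpha_lt0.
- move=> _ V hV /(Fm_critical_point m_gt1 hV) FmV; split => //.
  rewrite FmV -mulrA sgrM (gtr0_sg coef_gt0) mul1r.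
  by rewrite sgrM (gtr0_sg (half_sqnorm_gt0 V hV)) mulr1.
Qed.
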